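(* Let $G$ be a finite $p$-group with trivial Schur multiplier $\mathrm{H}^2(G,\mathbb{C}^\times)=1$ and $|Z(G)|=p$. Then $G$ has no faithful irreducible projective representation (so $\tau_{irr}(G)$ does not exist), and $\tau(G)=\delta(G)+1$.
   Context: A projective representation of $G$ is an $\alpha$-representation for some cocycle $\alpha$: a map $\rho:G\to\mathrm{GL}_n(\mathbb{C})$ with $\rho(1)=I$ and $\rho(g)\rho(h)=\alpha(g,h)\rho(gh)$; it is faithful if the only $g$ with $\rho(g)$ scalar is $g=1$. $\tau(G)$ is the least degree of a faithful projective representation; $\tau_{irr}(G)$ the least degree of a faithful irreducible projective representation (if one exists); $\delta(G)$ the least degree of a faithful ordinary representation. *)

From mathcomp Require Import all_boot all_order all_algebra all_fingroup all_solvable all_field all_character.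
Set Implicit Arguments. Unset Strict Implicit. Unset Printing Implicit Defensive.
Import GRing.Theory Num.Theory.
Local Open Scope ring_scope.

Section Proj.
Variables (gT : finGroupType) (G : {group gT}).

Definition cocycle (alpha : gT -> gT -> algC) :=
  (forall g h, g \in G -> h \in G -> alpha g h != 0) /\
  (forall g h k, g \in G -> h \in G -> k \in G ->
     alpha g h * alpha (g * h)%g k = alpha g (h * k)%g * alpha h k).

Definition schur_trivial :=
  forall alpha, cocycle alpha ->
    exists mu : gT -> algC,
      (forall g, g \in G -> mu g != 0) /\
      (forall g h, g \in G -> h \in G ->
         alpha g h = mu g * mu h / mu (g * h)%g).

Definition proj_rep n (alpha : gT -> gT -> algC) (rho : gT -> 'M[algC]_n) :=
  [/\ cocycle alpha, rho 1%g = 1%:M,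
      (forall g, g \in G -> rho g \in unitmx) &
      (forall g h, g \in G -> h \in G ->
         rho g *m rho h = alpha g h *: rho (g * h)%g)].

Definition proj_faithful n (rho : gT -> 'M[algC]_n) :=
  forall g, g \in G -> is_scalar_mx (rho g) -> g = 1%g.

(* irreducible: the whole space is nonzero and has no proper nonzero
   subspace stable under all rho g (same convention as mx_irreducible) *)
Definition proj_irreducible n (rho : gT -> 'M[algC]_n) :=
  (1%:M : 'M[algC]_n) != 0 /\
  forall U : 'M[algC]_n,
    (forall g, g \in G -> (U *m rho g <= U)%MS) -> U != 0 -> (1%:M <= U)%MS.

Definition has_faithful_proj n :=
  exists (alpha : gT -> gT -> algC) (rho : gT -> 'M[algC]_n),
    proj_rep alpha rho /\ proj_faithful rho.

Definition has_faithful_rep n :=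
  exists rG : mx_representation algC G n, mx_faithful rG.

End Proj.

Definition least_nat (P : nat -> Prop) (m : nat) := P m /\ forall k, P k -> (m <= k)%N.

From mathcomp Require Import all_boot all_order all_algebra all_fingroup all_solvable all_field all_character.
From Stdlib Require Import Classical_Prop.
From mathcomp Require Import ring.
Set Implicit Arguments. Unset Strict Implicit. Unset Printing Implicit Defensive.
Import GRing.Theory Num.Theory.
Local Open Scope ring_scope.

(* Since H^2(G, C^x) = 1, every projective representation is g |-> c(g) rG(g)
   for an ordinary representation rG, and it is projectively faithful iff no
   nontrivial g makes rG(g) scalar.  The centre Z(G) has order p, so any
   nontrivial z in Z(G) has rG(z) non-scalar; by Schur's lemma rG cannot then be
   irreducible.  Adding a trivial summand to a faithful ordinary representation
   gives a projectively faithful one, so tau <= delta + 1.  Conversely rG(z)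
   commutes with rG(G) and has order dividing p, so it acts nontrivially on
   some proper submodule U; the kernel of G on U is a normal subgroup of the
   nilpotent group G not containing Z(G), hence trivial, so delta < tau. *)

Lemma ex_least_nat (P : nat -> Prop) n : P n -> exists m, least_nat P m.
Proof.
elim/ltn_ind: n => n IHn Pn.
have [[k [lt_kn Pk]] | noP] := classic (exists k, (k < n)%N /\ P k).
  exact: IHn lt_kn Pk.
exists n; split=> // k Pk; rewrite leqNgt; apply/negP => lt_kn.
by apply: noP; exists k.
Qed.

Lemma normal_center_prime_trivial (gT : finGroupType) (G H : {group gT}) :
  nilpotent G -> prime #|'Z(G)|%g -> (H <| G)%g -> ~~ ('Z(G) \subset H)%g ->
  (H :=: 1)%g.
Proof.
move=> nilG prZ nHG notZH; apply: TI_center_nil nilG nHG _.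
by rewrite setIC prime_TIg.
Qed.

Lemma exprD1_sqr0 (R : pzRingType) (b : R) k :
  b ^+ 2 = 0 -> (1 + b) ^+ k = 1 + b *+ k.
Proof.
move=> b2; elim: k => [|k IHk]; first by rewrite expr0 mulr0n addr0.
by rewrite exprSr IHk mulrDl mul1r mulrDr mulr1 mulrnAl -expr2 b2 mul0rn addr0
  mulrS addrA.
Qed.

Lemma unipotent_root_of_unity_eq1 (F : numFieldType) n (A : 'M[F]_n) p :
  (0 < p)%N -> A ^+ p = 1 -> (A - 1) ^+ 2 = 0 -> A = 1.
Proof.
move=> p_gt0 Ap B2; apply/eqP; rewrite -subr_eq0.
have : (A - 1) *+ p = 0 by apply: (addrI 1); rewrite -exprD1_sqr0 // addr0 addrC subrK.
by rewrite -scaler_nat => /eqP; rewrite scaler_eq0 pnatr_eq0 eqn0Ngt p_gt0.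
Qed.

Lemma nonscalar_mx_gt0 (R : pzRingType) n (A : 'M[R]_n) :
  ~~ is_scalar_mx A -> (0 < n)%N.
Proof. by case: n A => // A; rewrite flatmx0 mx0_is_scalar. Qed.

Lemma exists_eigenvalue (F : closedFieldType) n (A : 'M[F]_n) :
  (0 < n)%N -> exists a, eigenvalue A a.
Proof.
case: n A => // n A _; have [a rootA] : exists a, root (char_poly A) a.
  by apply/closed_rootP; rewrite size_char_poly.
by exists a; rewrite eigenvalue_root_char.
Qed.

Section CentralizingMatrix.

Variables (F : numClosedFieldType) (gT : finGroupType) (G : {group gT}) (n : nat).
Variables (rG : mx_representation F G n) (A : 'M[F]_n).
Hypothesis cGA : centgmx rG A.

Lemma eigenspace_centg_module a : mxmodule rG (eigenspace A a).
Proof.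
apply: kermx_centg_module; apply/centgmxP => x Gx.
by rewrite mulmxBl mulmxBr (centgmxP cGA) // scalar_mxC.
Qed.

Lemma eigenspace_nonscalar_proper a :
  ~~ is_scalar_mx A -> (\rank (eigenspace A a) < n)%N.
Proof.
apply: contraR; rewrite -leqNgt => full; apply/is_scalar_mxP; exists a.
have /eigenspaceP : (1%:M <= eigenspace A a)%MS.
  by rewrite sub1mx /row_full eqn_leq rank_leq_col.
by rewrite mul1mx => ->; rewrite scalemx1.
Qed.

(* If 1 is not an eigenvalue of A, any eigenspace will do.  Otherwise the image
   of A - 1 is proper, and A cannot fix it pointwise: A - 1 would be
   square-zero, which forces A = 1 for A of finite order in characteristic 0. *)
Lemma centg_nonscalar_moved_submod p :
  (0 < p)%N -> A ^+ p = 1 -> ~~ is_scalar_mx A ->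
  exists U : 'M[F]_n, [/\ mxmodule rG U, (\rank U < n)%N & U *m A != U].
Proof.
move=> p_gt0 Ap nscA.
have [B_unit | B_nunit] := boolP (A - 1%:M \in unitmx).
  have [a eig_a] := exists_eigenvalue A (nonscalar_mx_gt0 nscA).
  exists (eigenspace A a); split.
  - exact: eigenspace_centg_module.
  - exact: eigenspace_nonscalar_proper.
  apply: contra eig_a => /eqP fixU; rewrite -(mulmxK B_unit (eigenspace A a)).
  by rewrite mulmxBr mulmx1 fixU subrr mul0mx.
exists (A - 1%:M); split.
- apply/mxmoduleP => x Gx.
  have -> : (A - 1%:M) *m rG x = rG x *m (A - 1%:M).
    by rewrite mulmxBl mulmxBr (centgmxP cGA) // mul1mx mulmx1.
  exact: submxMl.
- rewrite ltnNge; apply: contra B_nunit => full.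
  by rewrite -row_full_unit /row_full eqn_leq full rank_leq_col.
- apply: contraNneq nscA => BA; apply/is_scalar_mxP; exists 1.
  apply: (unipotent_root_of_unity_eq1 p_gt0 Ap).
  by rewrite expr2 -mulmxE mulmxBr BA mulmx1 subrr.
Qed.

End CentralizingMatrix.

Section ProjectiveRepresentations.

Variables (gT : finGroupType) (G : {group gT}).

Lemma schur_trivial_linearize n alpha (rho : gT -> 'M[algC]_n) :
  schur_trivial G -> proj_rep G alpha rho ->
  exists (rG : mx_representation algC G n) (c : gT -> algC),
    forall g, g \in G -> c g != 0 /\ rho g = c g *: rG g.
Proof.
move=> schurG [alpha_cocycle rho1 _ rhoM].
have [mu [mu_nz alphaE]] := schurG alpha alpha_cocycle.
have G1 := group1 G.
pose sigma g := (mu g)^-1 *: rho g.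
have sigma1 : sigma 1%g = 1%:M.
  have := rhoM 1%g 1%g G1 G1.
  rewrite rho1 mul1mx mulg1 alphaE // mulg1 -mulrA divff ?mu_nz // mulr1 => rho1E.
  by rewrite /sigma rho1 {1}rho1E scalerA mulVf ?mu_nz ?scale1r.
have sigmaM : {in G &, {morph sigma : x y / (x * y)%g >-> x *m y}}.
  move=> x y Gx Gy; rewrite /sigma -scalemxAl -scalemxAr rhoM // !scalerA alphaE //.
  congr (_ *: _).
  have := mu_nz _ Gx; have := mu_nz _ Gy; have := mu_nz _ (groupM Gx Gy).
  move: (mu x) (mu y) (mu (x * y)%g) => a b c c_nz b_nz a_nz.
  by field; rewrite a_nz b_nz c_nz.
exists (MxRepresentation (conj sigma1 sigmaM)), mu => g Gg.
by split; [exact: mu_nz | rewrite /= /sigma scalerA divff ?mu_nz ?scale1r].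
Qed.

Section Rescaling.

Variables (n : nat) (rho sigma : gT -> 'M[algC]_n) (c : gT -> algC).
Hypothesis rhoE : forall g, g \in G -> c g != 0 /\ rho g = c g *: sigma g.

Lemma proj_faithful_rescale : proj_faithful G rho -> proj_faithful G sigma.
Proof.
move=> rhoF g Gg /is_scalar_mxP[a sigma_g]; apply: rhoF => //.
by have [_ ->] := rhoE Gg; rewrite sigma_g scale_scalar_mx scalar_mx_is_scalar.
Qed.

Lemma proj_irreducible_rescale : proj_irreducible G rho -> proj_irreducible G sigma.
Proof.
move=> [nz1 rhoIrr]; split=> // U Ustab; apply: rhoIrr => g Gg.
by have [_ ->] := rhoE Gg; rewrite -scalemxAr scalemx_sub ?Ustab.
Qed.

End Rescaling.

Lemma proj_irreducible_mx_irr n (rG : mx_representation algC G n) :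
  proj_irreducible G rG -> mx_irreducible rG.
Proof.
move=> [nz1 rGirr]; split=> [|//|U Umod _ U_nz]; first exact: mxmodule1.
by apply: rGirr => // g Gg; apply: (mxmoduleP Umod).
Qed.

Lemma proj_faithful_irr_center_trivial n (rG : mx_representation algC G n) :
  proj_faithful G rG -> mx_irreducible rG -> 'Z(G)%g = 1%g.
Proof.
move=> rGF rGirr; apply/trivgP/subsetP => z Zz; rewrite inE.
have [Gz cGz] := centerP _ _ Zz; apply/eqP/rGF => //.
apply: (mx_abs_irr_cent_scalar (group_closure_closed_field rGirr)).
by apply/centgmxP => x Gx; rewrite -!repr_mxM ?cGz.
Qed.

Lemma mx_repr_proj_rep n (rG : mx_representation algC G n) :
  proj_rep G (fun _ _ => 1) rG.
Proof.
split; first by split=> *; rewrite ?oner_neq0 ?mul1r.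
- exact: repr_mx1.
- exact: repr_mx_unit.
- by move=> g h Gg Gh; rewrite scale1r repr_mxM.
Qed.

Lemma const1_mx_repr : mx_repr G (fun _ => 1%:M : 'M[algC]_1).
Proof. by split=> // g h _ _; rewrite mul1mx. Qed.

Lemma has_faithful_proj_succ d : has_faithful_rep G d -> has_faithful_proj G d.+1.
Proof.
move=> [rG rGF].
pose rho := dadd_grepr (Representation (MxRepresentation const1_mx_repr))
                       (Representation rG).
exists (fun _ _ => 1), rho; split; first exact: mx_repr_proj_rep.
move=> g Gg /is_scalar_mxP[a]; rewrite /rho (scalar_mx_block 1 d) /= => rho_g.
have [a1 _ _ rGg] := @eq_block_mx _ 1 d 1 d _ _ _ _ _ _ _ _ rho_g.
have {}a1 : a = 1 by have := congr1 (fun M : 'M_1 => M ord0 ord0) a1; rewrite !mxE.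
by apply/set1P/(subsetP rGF)/rkerP; rewrite -a1.
Qed.

Lemma proj_faithful_lt_faithful_rep n (rG : mx_representation algC G n) :
  nilpotent G -> prime #|'Z(G)|%g -> proj_faithful G rG ->
  exists2 d, (d < n)%N & has_faithful_rep G d.
Proof.
move=> nilG prZ rGF.
have [z Zz nt_z] : exists2 z, z \in 'Z(G)%g & z != 1%g.
  by apply/trivgPn; rewrite trivg_card1; case: eqP prZ => // ->.
have [Gz cGz] := centerP _ _ Zz.
have nscA : ~~ is_scalar_mx (rG z) by apply: contra nt_z => /(rGF z Gz) ->.
case: n rG rGF nscA => [|n] rG rGF nscA; first by rewrite flatmx0 mx0_is_scalar in nscA.
have cGA : centgmx rG (rG z).
  by apply/centgmxP => x Gx; rewrite -!repr_mxM ?cGz.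
have zp1 : rG z ^+ #|'Z(G)|%g = 1.
  by rewrite -repr_mxX // expg_cardG // repr_mx1.
have [U [Umod rkU zU]] := centg_nonscalar_moved_submod cGA (prime_gt0 prZ) zp1 nscA.
have notZK : ~~ ('Z(G) \subset rker (submod_repr Umod))%g.
  by rewrite rker_submod; apply: contra zU => /subsetP/(_ z Zz); rewrite inE Gz.
exists (\rank U) => //; exists (submod_repr Umod).
by rewrite /mx_faithful (normal_center_prime_trivial nilG prZ (rker_normal _) notZK).
Qed.

End ProjectiveRepresentations.

Theorem lemma4p2 (gT : finGroupType) (G : {group gT}) (p : nat) :
  prime p -> (p.-group G)%g -> schur_trivial G -> #|'Z(G)|%g = p ->
  (forall n (alpha : gT -> gT -> algC) (rho : gT -> 'M[algC]_n),
      proj_rep G alpha rho -> proj_faithful G rho -> ~ proj_irreducible G rho)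
  /\ (exists d, least_nat (has_faithful_rep G) d /\
                least_nat (has_faithful_proj G) d.+1).
Proof.
move=> pr_p pG schurG cardZ.
have nilG := pgroup_nil pG.
have prZ : prime #|'Z(G)|%g by rewrite cardZ.
split=> [n alpha rho rhoR rhoF rhoIrr | ].
  have [rG [c rhoE]] := schur_trivial_linearize schurG rhoR.
  have rGF := proj_faithful_rescale rhoE rhoF.
  have rGirr := proj_irreducible_mx_irr (proj_irreducible_rescale rhoE rhoIrr).
  by move: prZ; rewrite (proj_faithful_irr_center_trivial rGF rGirr) cards1.
have [d [faithful_d min_d]] := @ex_least_nat (has_faithful_rep G) _
  (ex_intro _ (regular_repr algC G) (regular_mx_faithful algC G)).
exists d; split=> //; split=> [|k [alpha [rho [rhoR rhoF]]]].
  exact: has_faithful_proj_succ.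
have [rG [c rhoE]] := schur_trivial_linearize schurG rhoR.
have [d' lt_d'k faithful_d'] :=
  proj_faithful_lt_faithful_rep nilG prZ (proj_faithful_rescale rhoE rhoF).
exact: leq_ltn_trans (min_d _ faithful_d') lt_d'k.
Qed.
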